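(* Let $m,n\ge 1$. There exist a constant tensor $\mathbf W=(w_{ijk})\in\mathbb R^{m\times n\times mn}$ and a constant matrix $\mathbf Q\in\mathbb R^{n\times mn}$ such that for every entrywise non-negative matrix $\mathbf X=(x_{ij})\in\mathbb R_{\ge 0}^{m\times n}$ the following holds: defining $y_{ik}=\sum_{j=1}^n x_{ij}w_{ijk}$ for $i\in\{1,\dots,m\}$, $k\in\{1,\dots,mn\}$, and $\hat y_k=\max_{1\le i\le m}y_{ik}$, we have $$\Big(\sum_{i=1}^m x_{ij}\Big)_{j=1}^n=\mathbf Q\,(\hat y_k)_{k=1}^{mn}.$$
   Context: $\mathbf W$ and $\mathbf Q$ do not depend on $\mathbf X$; they depend only on $m$ and $n$. *)

From HB Require Import structures.
From mathcomp Require Import all_boot all_order all_algebra.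
Set Implicit Arguments. Unset Strict Implicit. Unset Printing Implicit Defensive.
Import Order.TTheory GRing.Theory Num.Theory.
Local Open Scope ring_scope.

(* Maximum over a nonempty ordinal range 'I_m (m > 0), seeded with the value
   at index 0 (Num.max is idempotent, so this is the true maximum). *)
Definition ordmax (R : realDomainType) (m : nat) (hm : (0 < m)%N)
  (F : 'I_m -> R) : R :=
  \big[Num.max/F (Ordinal hm)]_(i < m) F i.

From HB Require Import structures.
From mathcomp Require Import all_boot all_order all_algebra.
Import Order.TTheory GRing.Theory Num.Theory.
Local Open Scope ring_scope.

(* Index the m*n output channels k by the pairs (i, j)
   through the bijection [mxvec_index : 'I_m -> 'I_n -> 'I_(m*n)].  The
   weight tensor [copy_weights] makes channel k = (i, j) copy the entry
   x_ij into row i and put 0 into every other row, so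
   y_{i',(i,j)} = [i' = i] * x_ij.  Since X is non-negative, the maximum
   over rows of channel (i, j) is attained at row i and equals x_ij: the
   max-pooled vector yhat is just X flattened.  The matrix [column_summer]
   then recovers each column sum  sum_i x_ij  by adding up the channels
   (i, j), i = 1..m. *)

Section OrdMax.
Variables (R : realDomainType) (m : nat) (hm : (0 < m)%N).

Lemma ordmax_eq (F : 'I_m -> R) (i : 'I_m) :
  (forall k, F k <= F i) -> ordmax hm F = F i.
Proof.
move=> F_le; apply: le_anti; rewrite /ordmax le_bigmax andbT.
by apply: bigmax_le => // k _; exact: F_le.
Qed.

End OrdMax.

Section CopyConstruction.
Variables (R : pzRingType) (m n : nat).

Definition copy_weights (i : 'I_m) (j : 'I_n) (k : 'I_(m * n)) : R :=
  (k == mxvec_index i j)%:R.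

Definition column_summer : 'M[R]_(n, m * n) :=
  \matrix_(j, k) \sum_(i < m) (k == mxvec_index i j)%:R.

Lemma mxvec_index_inj (i i' : 'I_m) (j j' : 'I_n) :
  mxvec_index i j = mxvec_index i' j' -> i = i' /\ j = j'.
Proof. by rewrite /mxvec_index => /cast_ord_inj /enum_rank_inj [-> ->]. Qed.

Lemma copy_channel (X : 'M[R]_(m, n)) (i i' : 'I_m) (j : 'I_n) :
  \sum_(j' < n) X i' j' * copy_weights i' j' (mxvec_index i j)
  = if i' == i then X i j else 0.
Proof.
rewrite /copy_weights; case: eqP => [->|ne_i].
  rewrite (bigD1 j) //= eqxx mulr1 big1 ?addr0 // => j' ne_j.
  case: eqP => [/mxvec_index_inj [_ eq_j]|_]; last by rewrite mulr0.
  by rewrite eq_j eqxx in ne_j.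
rewrite big1 // => j' _.
case: eqP => [/mxvec_index_inj [eq_i _]|_]; last by rewrite mulr0.
by rewrite eq_i in ne_i.
Qed.

Lemma column_summer_mul (v : 'cV[R]_(m * n)) (j : 'I_n) :
  (column_summer *m v) j 0 = \sum_(i < m) v (mxvec_index i j) 0.
Proof.
rewrite !mxE; under eq_bigr => k _ do rewrite mxE big_distrl /=.
rewrite exchange_big /=; apply: eq_bigr => i _.
rewrite (bigD1 (mxvec_index i j)) //= eqxx mul1r big1 ?addr0 // => k /negbTE ->.
by rewrite mul0r.
Qed.

End CopyConstruction.
Arguments copy_weights {R m n}.

Lemma copy_maxpool (R : realDomainType) (m n : nat) (hm : (0 < m)%N)
    (X : 'M[R]_(m, n)) (i : 'I_m) (j : 'I_n) :
  (forall i j, 0 <= X i j) ->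
  ordmax hm (fun i' => \sum_(j' < n) X i' j' * copy_weights i' j' (mxvec_index i j))
  = X i j.
Proof.
move=> X_ge0; rewrite (@ordmax_eq _ _ hm _ i); first by rewrite copy_channel eqxx.
by move=> i'; rewrite !copy_channel eqxx; case: eqP.
Qed.

Theorem proposition3 (R : realFieldType) (m n : nat)
  (hm : (0 < m)%N) (hn : (0 < n)%N) :
  exists (W : 'I_m -> 'I_n -> 'I_(m * n) -> R) (Q : 'M[R]_(n, m * n)),
  forall X : 'M[R]_(m, n),
    (forall i j, 0 <= X i j) ->
    let y := fun (i : 'I_m) (k : 'I_(m * n)) => \sum_(j < n) X i j * W i j k in
    let yhat : 'cV[R]_(m * n) := \col_k ordmax hm (fun i => y i k) in
    (\col_j \sum_(i < m) X i j) = Q *m yhat.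
Proof.
exists copy_weights, (column_summer R m n) => X X_ge0 y yhat.
apply/matrixP => j z; rewrite (ord1 z) column_summer_mul mxE.
by apply: eq_bigr => i _; rewrite mxE copy_maxpool.
Qed.
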